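(* Let $R_n(x)=\sum_{k=0}^nR_{n,k}x^k$ for $n\ge1$. For integers $n\ge k\ge 0$ let $B_{n,k}=B_{n,k}(x_1,x_2,\dots,x_{n-k+1})$ be the partial Bell polynomials, defined by $\sum_{n\ge k}B_{n,k}\frac{t^n}{n!}=\frac1{k!}\big(\sum_{i\ge1}x_i\frac{t^i}{i!}\big)^k$. When $x_i=(1-x^2)^{\lfloor (i-1)/2\rfloor}$ for each $i\ge1$, we have, for $n\ge 1$, $$R_{n+1}(x)=\sum_{k=1}^{n}(-1)^{n-k}k!\,(1+x)^{k+1}B_{n,k}.$$
   Context: Let $D$ be the derivation of $\mathbb{Q}[y,z]$ with $D(y)=z^2$, $D(z)=yz$ (corresponding to $d/dx$ with $y=\tan x$, $z=\sec x$). The integers $R_{n,k}$ are defined for $n\ge1$ by $D^n(y+z)=\sum_{k=0}^nR_{n,k}y^{n-k}z^{k+1}$ in $\mathbb{Q}[y,z]$. Equivalently, $R_1(x)=1+x$ and $R_{n+1}(x)=(1+nx^2)R_n(x)+x(1-x^2)R_n'(x)$ for $n\ge1$. *)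

From HB Require Import structures.
From mathcomp Require Import all_boot all_order all_algebra.
Set Implicit Arguments. Unset Strict Implicit. Unset Printing Implicit Defensive.
Import Order.TTheory GRing.Theory Num.Theory.
Local Open Scope ring_scope.

(* Q[y,z] is represented as {poly {poly rat}}: the outer variable is z,
   the inner variable (coefficients) is y.  The monomial y^a z^b of p has
   coefficient (p`_b)`_a. *)
Definition QYZ := {poly {poly rat}}.
Definition yv : QYZ := ('X : {poly rat})%:P.
Definition zv : QYZ := 'X.

(* The derivation D of Q[y,z] with D y = z^2, D z = y z :
   D p = (dp/dy) * D y + (dp/dz) * D z. *)
Definition Dder (p : QYZ) : QYZ :=
  map_poly (@deriv rat) p * zv ^+ 2 + p^`() * (yv * zv).

Definition Rcoef (n k : nat) : rat :=
  ((iter n Dder (yv + zv))`_(k.+1))`_(n - k).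

Definition Rpoly (n : nat) : {poly rat} := \poly_(k < n.+1) Rcoef n k.

(* Only the terms i <= n can contribute to [t^n]. *)
Definition bellB (n k : nat) (xs : nat -> {poly rat}) : {poly rat} :=
  let S : {poly {poly rat}} :=
    \sum_(1 <= i < n.+1) (((i`!)%:R^-1 : rat) *: xs i) *: 'X^i in
  ((n`!)%:R / (k`!)%:R : rat) *: (S ^+ k)`_n.

Definition xsR (i : nat) : {poly rat} := (1 - 'X^2) ^+ ((i.-1)./2).

(* Let F_m = D^m (y + z) and let L p = D p - y p = z D (p / z).  L is a twisted
   derivation, L (p q) = D p * q + p * L q, so Leibniz's rule gives
     L^n (F_1 (z - y)) = sum_i C(n, i) F_(n-i+1) L^i (z - y).
   As F_1 (z - y) = z (z^2 - y^2) and z^2 - y^2 is a first integral of D,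
   the left side vanishes for n >= 1, while L^i (z - y) is an explicit power
   of y^2 - z^2, times 1 or -y.  Each F_m is homogeneous, so putting y = 1
   turns F_m into x R_m and the identity into the binomial convolution
     sum_i C(m, i) (-1)^i a_i R_(m-i+1) = [m = 0] (1 + x),
   with a_0 = 1 and a_i = (1 + x) x_i.  In exponential generating functions,
   (-1)^j R_(j+1) is therefore the coefficient sequence of
   (1 + x) / (1 + (1 + x) S(t)), S(t) = sum_i x_i t^i / i!; expanding the
   geometric series and comparing with the definition of B_(n,k) gives the
   formula. *)

From HB Require Import structures.
From mathcomp Require Import all_boot all_order all_algebra.
From mathcomp Require Import ring zify.
Import Order.TTheory GRing.Theory Num.Theory.
Set Implicit Arguments. Unset Strict Implicit. Unset Printing Implicit Defensive.
Local Open Scope ring_scope.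

Section BinomialConvolution.
Variable R : comPzRingType.

Definition binconv (a x : nat -> R) (m : nat) : R :=
  \sum_(i < m.+1) 'C(m, i)%:R * (a i * x (m - i)%N).

Lemma binconvS (a x : nat -> R) m :
  binconv a x m.+1 = binconv a (fun j => x j.+1) m + binconv (fun i => a i.+1) x m.
Proof.
rewrite /binconv big_ord_recl bin0 subn0 mul1r.
under eq_bigr => i _ do rewrite lift0 subSS binS natrD mulrDl.
rewrite big_split /= addrA; congr (_ + _); apply/esym.
rewrite big_ord_recl bin0 subn0 mul1r [X in _ = _ + X]big_ord_recr.
rewrite bin_small // mul0r /= addr0; congr (_ + _); apply: eq_bigr => i _.
by rewrite -[bump 0 i]/(i.+1) subnSK.
Qed.

Lemma binconvM (c d : R) (a x : nat -> R) m :
  binconv (fun i => c * a i) (fun j => d * x j) m = c * d * binconv a x m.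
Proof.
rewrite /binconv mulr_sumr; apply: eq_bigr => i _.
by rewrite mulrACA [LHS]mulrCA.
Qed.

Lemma binconv_sign (a x : nat -> R) m :
  binconv (fun i => (-1) ^+ i * a i) (fun j => (-1) ^+ j * x j) m =
  (-1) ^+ m * binconv a x m.
Proof.
rewrite /binconv mulr_sumr; apply: eq_bigr => i _.
by rewrite mulrACA -exprD subnKC -1?ltnS // [LHS]mulrCA.
Qed.

Lemma binconv_inj (a x y : nat -> R) n : a 0%N = 1 ->
  (forall m, (m <= n)%N -> binconv a x m = binconv a y m) ->
  forall m, (m <= n)%N -> x m = y m.
Proof.
move=> a0 eq_conv; elim/ltn_ind => m IHm le_mn.
have := eq_conv m le_mn; rewrite /binconv !big_ord_recl bin0 subn0 a0 !mul1r.
suff -> : \sum_(i < m) 'C(m, lift ord0 i)%:R * (a (lift ord0 i) * x (m - lift ord0 i)%N) =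
          \sum_(i < m) 'C(m, lift ord0 i)%:R * (a (lift ord0 i) * y (m - lift ord0 i)%N).
  exact: addIr.
apply: eq_bigr => i _; rewrite IHm // lift0; have := ltn_ord i; lia.
Qed.

Lemma eq_binconv (a a' x x' : nat -> R) m :
  a =1 a' -> x =1 x' -> binconv a x m = binconv a' x' m.
Proof. by move=> eq_a eq_x; apply: eq_bigr => i _; rewrite eq_a eq_x. Qed.

End BinomialConvolution.

Lemma rmorph_binconv (R S : comPzRingType) (f : {rmorphism R -> S}) a x m :
  f (binconv a x m) = binconv (f \o a) (f \o x) m.
Proof.
by rewrite rmorph_sum; apply: eq_bigr => i _; rewrite /= !rmorphM rmorph_nat.
Qed.

Section TwistedLeibniz.
Variables (R : comPzRingType) (D : {additive R -> R}).
Hypothesis DM : forall p q, D (p * q) = D p * q + p * D q.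

Lemma der1 : D 1 = 0.
Proof.
have := DM 1 1; rewrite !mulr1 mul1r => D1_double.
by apply: (@addrI _ (D 1)); rewrite -D1_double addr0.
Qed.

Lemma der_expr_eq0 (x : R) m : D x = 0 -> D (x ^+ m) = 0.
Proof.
move=> Dx0; elim: m => [|m IHm]; first exact: der1.
by rewrite exprS DM Dx0 IHm mul0r mulr0 addr0.
Qed.

Variable a : R.

Definition twist (p : R) : R := D p - a * p.

Lemma twist_is_zmod_morphism : zmod_morphism twist.
Proof. by move=> p q; rewrite /twist raddfB; ring. Qed.

HB.instance Definition _ := GRing.isZmodMorphism.Build R R twist
  twist_is_zmod_morphism.

Lemma twistM p q : twist (p * q) = D p * q + p * twist q.
Proof. by rewrite /twist DM mulrBr mulrCA addrA. Qed.

Lemma iter_twistM n p q :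
  iter n twist (p * q) =
  binconv (fun i => iter i twist q) (fun j => iter j D p) n.
Proof.
elim: n => [|n IHn]; first by rewrite /binconv big_ord1 mul1r mulrC.
rewrite binconvS iterS IHn /binconv raddf_sum -big_split.
apply: eq_bigr => i _.
by rewrite raddfMnat /= [iter i twist q * _]mulrC twistM; ring.
Qed.

End TwistedLeibniz.

Lemma natr_fact_neq0 k : ((k`!)%:R : rat) != 0.
Proof. by rewrite pnatr_eq0 -lt0n fact_gt0. Qed.

Section ExponentialGeneratingFunction.
Variable A : comAlgType rat.

Definition egf n (x : nat -> A) : {poly A} :=
  \poly_(i < n.+1) ((((i`!)%:R)^-1 : rat) *: x i).

Lemma coef_egfM n x (P : {poly A}) m : (m <= n)%N ->
  (egf n x * P)`_m =
  (((m`!)%:R)^-1 : rat) *: binconv x (fun j => ((j`!)%:R : rat) *: P`_j) m.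
Proof.
move=> le_mn; rewrite coefM /binconv scaler_sumr; apply: eq_bigr => i _.
have le_im : (i <= m)%N by rewrite -ltnS.
rewrite coef_poly (leq_ltn_trans le_im) // mulr_natl -scaler_nat -scalerAr.
rewrite -scalerAl !scalerA; congr (_ *: _).
rewrite -(bin_fact le_im) !natrM; field.
by rewrite !natr_fact_neq0 pnatr_eq0 -lt0n bin_gt0.
Qed.

End ExponentialGeneratingFunction.

Lemma coef_expr_lt (R : nzRingType) (p : {poly R}) k i :
  p`_0 = 0 -> (i < k)%N -> (p ^+ k)`_i = 0.
Proof.
move=> p0; elim: k i => [//|k IHk] i lt_ik.
rewrite exprS coefM big1 // => [[[|j] lt_ji]] _ /=; first by rewrite p0 mul0r.
by rewrite IHk ?mulr0 //; lia.
Qed.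

Lemma map_deriv_M (p q : QYZ) : map_poly (@deriv rat) (p * q) =
  map_poly (@deriv rat) p * q + p * map_poly (@deriv rat) q.
Proof.
apply/polyP => i; rewrite coefD coef_map /= !coefM raddf_sum -big_split /=.
by apply: eq_bigr => j _; rewrite derivM !coef_map.
Qed.

Lemma DderM (p q : QYZ) : Dder (p * q) = Dder p * q + p * Dder q.
Proof. by rewrite /Dder map_deriv_M derivM; ring. Qed.

Lemma Dder_is_zmod_morphism : zmod_morphism Dder.
Proof. by move=> p q; rewrite /Dder raddfB derivB; ring. Qed.

HB.instance Definition _ := GRing.isZmodMorphism.Build QYZ QYZ Dder
  Dder_is_zmod_morphism.

Lemma Dder_y : Dder yv = zv ^+ 2.
Proof. by rewrite /Dder /yv map_polyC /= derivC derivX mul0r addr0 mul1r. Qed.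

Lemma Dder_z : Dder zv = yv * zv.
Proof.
have map_deriv_z : map_poly (@deriv rat) zv = 0.
  apply/polyP => i; rewrite coef_map coefX coef0.
  by case: (i == 1)%N => /=; rewrite ?deriv0 // -polyC1 derivC.
by rewrite /Dder map_deriv_z mul0r add0r derivX mul1r.
Qed.

(* sec^2 x - tan^2 x = 1; a first integral of D. *)
Definition pyth : QYZ := zv ^+ 2 - yv ^+ 2.

Lemma Dder_pyth : Dder pyth = 0.
Proof. by rewrite /pyth raddfB /= !expr2 !DderM Dder_y Dder_z; ring. Qed.

(* Ltan p = z D (p / z): differentiation conjugated by cos x = 1 / z. *)
Definition Ltan : QYZ -> QYZ := twist Dder yv.

(* kappa i = z D^i ((z - y) / z), i.e. sec x (d/dx)^i (1 - sin x). *)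
Definition kappa (i : nat) : QYZ :=
  if i is j.+1 then (- pyth) ^+ (j./2).+1 * (if odd j then - yv else 1)
  else zv - yv.

Lemma Ltan_kappa i : Ltan (kappa i) = kappa i.+1.
Proof.
rewrite /Ltan /twist; case: i => [|j] /=.
  by rewrite (raddfB Dder) /= Dder_y Dder_z /pyth expr1; ring.
rewrite DderM (der_expr_eq0 DderM) ?(raddfN Dder) /= ?Dder_pyth ?oppr0 // mul0r add0r.
rewrite uphalf_half; case: (odd j) => /=; last by rewrite (der1 DderM); ring.
by rewrite (raddfN Dder) /= Dder_y add1n !exprS /pyth; ring.
Qed.

Lemma iter_Ltan_kappa i : iter i Ltan (zv - yv) = kappa i.
Proof. by elim: i => [//|i IHi]; rewrite iterS IHi Ltan_kappa. Qed.

Lemma Ltan_z_pyth : Ltan (zv * pyth) = 0.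
Proof. by rewrite /Ltan /twist /= DderM Dder_z Dder_pyth; ring. Qed.

Lemma iter_Dder1 : iter 1 Dder (yv + zv) = zv ^+ 2 + yv * zv.
Proof. by rewrite /= (raddfD Dder) /= Dder_y Dder_z. Qed.

(* Leibniz rule for Ltan applied to D(y + z) * (z - y) = z * pyth, whose
   Ltan-derivatives all vanish. *)
Lemma binconv_kappa_iter_Dder n : (0 < n)%N ->
  binconv kappa (fun j => iter j.+1 Dder (yv + zv)) n = 0.
Proof.
case: n => // n _.
have z_pyth : zv * pyth = iter 1 Dder (yv + zv) * (zv - yv).
  by rewrite iter_Dder1 /pyth; ring.
have : iter n.+1 Ltan (zv * pyth) = 0.
  by rewrite iterSr Ltan_z_pyth; elim: n => //= n ->; apply: raddf0.
rewrite z_pyth (iter_twistM DderM) => <-.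
by apply: eq_binconv => i; rewrite ?iter_Ltan_kappa ?iterSr.
Qed.

Lemma coef_Dder (p : QYZ) b a : ((Dder p)`_b)`_a =
  (if (b < 2)%N then 0 else (p`_(b - 2))`_a.+1 *+ a.+1) +
  (if b == 0%N then 0 else if a == 0%N then 0 else (p`_b)`_a.-1 *+ b).
Proof.
rewrite /Dder /zv /yv !coefD coefMXn mulrA coefMX; congr (_ + _).
  by case: (b < 2)%N; rewrite ?coef0 // coef_map /= coef_deriv.
case: b => [|b] /=; first by rewrite coef0.
rewrite coefMC coef_deriv coefMX.
by case: (a == 0%N); rewrite ?coef0 // coefMn.
Qed.

Definition homog m (p : QYZ) :=
  forall b a, ~~ ((0 < b)%N && (a + b == m.+1)%N) -> (p`_b)`_a = 0.

Lemma homog_Dder m p : homog m p -> homog m.+1 (Dder p).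
Proof.
move=> hom_p b a not_mon; rewrite coef_Dder.
have shift_mon b' a' : (0 < b)%N -> (a' + b' = a + b - 1)%N -> (p`_b')`_a' = 0.
  move=> b_gt0 eq_deg; apply: hom_p; apply: contra not_mon => /andP[_ /eqP deg'].
  by rewrite b_gt0; apply/eqP; lia.
case: ltnP => [_|b_ge2]; [rewrite add0r | rewrite shift_mon ?mul0rn ?add0r; [|lia|lia]].
all: case: eqP => // /eqP b_neq0; case: eqP => // /eqP a_neq0.
all: by rewrite shift_mon ?mul0rn //; lia.
Qed.

Lemma homog_iter_Dder m : (0 < m)%N -> homog m (iter m Dder (yv + zv)).
Proof.
case: m => // m _; elim: m => [|m IHm]; last exact: homog_Dder.
rewrite iter_Dder1 /zv /yv => b a not_mon.
rewrite coefD coefXn mulrC coefXM coefC.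
case: b not_mon => [|[|[|b]]] /= not_mon; rewrite ?coef0 ?add0r ?addr0 //;
  case: a not_mon => [|[|a]] //= not_mon; rewrite ?coefX ?coef1 ?coefC ?coef0 //.
Qed.

Notation ev := (map_poly (horner_eval (1 : rat)) : QYZ -> {poly rat}).

Lemma ev_homog m p : homog m p ->
  ev p = 'X * \poly_(k < m.+1) (p`_k.+1)`_(m - k).
Proof.
move=> hom_p; apply/polyP => b; rewrite coef_map /= horner_evalE coefXM.
case: b => [|b] /=.
  suff -> : p`_0 = 0 by rewrite horner0.
  by apply/polyP => a; rewrite coef0 hom_p.
rewrite coef_poly; case: ltnP => [b_le_m|b_gt_m].
  have monomial : p`_b.+1 = ((p`_b.+1)`_(m - b)) *: 'X^(m - b).
    apply/polyP => a; rewrite coefZ coefXn.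
    case: eqP => [->|/eqP a_neq]; first by rewrite mulr1.
    by rewrite mulr0 hom_p //; apply/negP => /andP[_ /eqP]; move/eqP: a_neq; lia.
  by rewrite {1}monomial hornerZ hornerXn expr1n mulr1.
suff -> : p`_b.+1 = 0 by rewrite horner0.
by apply/polyP => a; rewrite coef0 hom_p //; apply/negP => /andP[_ /eqP]; lia.
Qed.

Lemma ev_iter_Dder m : (0 < m)%N -> ev (iter m Dder (yv + zv)) = 'X * Rpoly m.
Proof. by move=> m_gt0; rewrite (ev_homog (homog_iter_Dder m_gt0)). Qed.

Lemma ev_y : ev yv = 1.
Proof. by rewrite /yv map_polyC /= horner_evalE hornerX. Qed.

Lemma ev_z : ev zv = 'X.
Proof. exact: map_polyX. Qed.

Lemma ev_pyth : ev (- pyth) = 1 - 'X ^+ 2.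
Proof. by rewrite /pyth rmorphN rmorphB !rmorphXn /= ev_y ev_z expr1n opprB. Qed.

Lemma Rpoly1 : Rpoly 1 = 1 + 'X.
Proof.
apply: (@mulfI _ 'X); first by rewrite polyX_eq0.
by rewrite -ev_iter_Dder // iter_Dder1 rmorphD !rmorphM /= ev_y ev_z; ring.
Qed.

Definition denom_coef (i : nat) : {poly rat} :=
  if i is 0 then 1 else (1 + 'X) * xsR i.

Lemma ev_kappa i : ev (kappa i) = ('X - 1) * ((-1) ^+ i * denom_coef i).
Proof.
case: i => [|j] /=; first by rewrite rmorphB /= ev_y ev_z expr0 !mulr1.
rewrite rmorphM rmorphXn /= ev_pyth /xsR /= -signr_odd /=.
case: (odd j) => /=; rewrite ?rmorphN /= ?ev_y exprS; ring.
Qed.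

Lemma Rpoly_binconv m :
  binconv (fun i => (-1) ^+ i * denom_coef i) (fun j => Rpoly j.+1) m =
  (m == 0%N)%:R * (1 + 'X).
Proof.
case: m => [|m]; first by rewrite /binconv big_ord1 Rpoly1 /= !mul1r.
have X_Xm1_neq0 : ('X * ('X - 1) : {poly rat}) != 0.
  by rewrite mulf_eq0 negb_or polyX_eq0 -polyC1 polyXsubC_eq0.
apply: (mulfI X_Xm1_neq0); rewrite mul0r mulr0 [X in X * _]mulrC -binconvM.
rewrite -[RHS](rmorph0 (map_poly (horner_eval (1 : rat)))).
rewrite -(binconv_kappa_iter_Dder (ltn0Sn m)) rmorph_binconv.
by apply: eq_binconv => i /=; [rewrite ev_kappa | rewrite -ev_iter_Dder].
Qed.

Definition bell_series n (xs : nat -> {poly rat}) : {poly {poly rat}} :=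
  \sum_(1 <= i < n.+1) ((((i`!)%:R)^-1 : rat) *: xs i) *: 'X^i.

Lemma bellBE n k xs :
  bellB n k xs = ((n`!)%:R / (k`!)%:R : rat) *: ((bell_series n xs) ^+ k)`_n.
Proof. by []. Qed.

Lemma coef_bell_series n xs i : (bell_series n xs)`_i =
  if (0 < i <= n)%N then (((i`!)%:R)^-1 : rat) *: xs i else 0.
Proof.
rewrite /bell_series coef_sum.
under eq_bigr => j _ do rewrite coefZ coefXn.
case: ifP => i_in.
  rewrite (bigD1_seq i) /= ?mem_index_iota ?iota_uniq // eqxx mulr1.
  by rewrite big1 ?addr0 // => j /negbTE; rewrite eq_sym => ->; rewrite mulr0.
rewrite big_nat_cond big1 // => j /andP[j_in _].
case: eqP => [eq_ij|_]; last by rewrite mulr0.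
by move: i_in j_in; rewrite eq_ij; lia.
Qed.

Lemma egf_denom_coef n : egf n denom_coef = 1 + (1 + 'X)%:P * bell_series n xsR.
Proof.
apply/polyP => i; rewrite coef_poly coefD coef1 coefCM coef_bell_series.
case: i => [|i] /=; first by rewrite scale1r mulr0 addr0.
rewrite add0r ltnS; case: leqP => _; by rewrite ?mulr0 ?scalerAr.
Qed.

(* The inverse of egf n denom_coef modulo t^(n+1). *)
Definition denom_inv n : {poly {poly rat}} :=
  \sum_(k < n.+1) (- ((1 + 'X)%:P * bell_series n xsR)) ^+ k.

Definition quot_coef n j : {poly rat} :=
  ((j`!)%:R : rat) *: ((1 + 'X)%:P * denom_inv n)`_j.

Lemma binconv_quot_coef n m : (m <= n)%N ->
  binconv denom_coef (quot_coef n) m = (m == 0%N)%:R * (1 + 'X).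
Proof.
move=> le_mn; set V := - ((1 + 'X)%:P * bell_series n xsR).
have V0 : V`_0 = 0 by rewrite coefN coefCM coef_bell_series mulr0 oppr0.
have geom : egf n denom_coef * denom_inv n = 1 - V ^+ n.+1.
  by rewrite egf_denom_coef -[(1 + 'X)%:P * _]opprK -/V -opprB mulNr -subrX1 opprB.
have := coef_egfM denom_coef ((1 + 'X)%:P * denom_inv n) le_mn.
rewrite mulrCA geom coefCM coefB coef1 (coef_expr_lt V0) ?ltnS // subr0.
move/(congr1 (fun p => ((m`!)%:R : rat) *: p)); rewrite scalerA.
rewrite divff ?natr_fact_neq0 // scale1r => <-.
by case: m le_mn => [|m] _; rewrite ?mulr0 ?mul0r ?scaler0 // mulr1 mul1r scale1r.
Qed.

Lemma sign_fact_term n k (s : {poly rat}) : (k <= n)%N ->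
  (-1) ^+ n * (((n`!)%:R : rat) *: ((1 + 'X) * ((- (1 + 'X)) ^+ k * s))) =
  ((-1) ^+ (n - k) * (k`!)%:R) *:
    ((1 + 'X) ^+ k.+1 * (((n`!)%:R / (k`!)%:R : rat) *: s)).
Proof.
move=> le_kn.
have fact_split : ((n`!)%:R : rat)%:P = (k`!)%:R%:P * ((n`!)%:R / (k`!)%:R)%:P.
  by rewrite -polyCM mulrC divfK ?natr_fact_neq0.
have sign_sub : (-1) ^+ (n - k) = (-1) ^+ n * (-1) ^+ k :> {poly rat}.
  by rewrite -{2}(subnK le_kn) exprD -mulrA -expr2 sqrr_sign mulr1.
rewrite -!mul_polyC fact_split [((-1) ^+ _ * _)%:P]polyCM rmorphXn rmorphN1.
by rewrite sign_sub [(- (1 + 'X)) ^+ k]exprNn rmorph_nat exprS; ring.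
Qed.

Lemma quot_coef_bell n : (0 < n)%N ->
  (-1) ^+ n * quot_coef n n =
  \sum_(1 <= k < n.+1)
     ((-1) ^+ (n - k) * (k`!)%:R) *: ((1 + 'X) ^+ k.+1 * bellB n k xsR).
Proof.
move=> n_gt0; rewrite /quot_coef /denom_inv coefCM coef_sum big_ord_recl.
rewrite expr0 coef1 gtn_eqF // add0r big_add1 big_mkord.
rewrite [(1 + 'X) * _]mulr_sumr scaler_sumr [(-1) ^+ n * _]mulr_sumr.
apply: eq_bigr => i _; rewrite lift0 -mulNr -(polyCN (1 + 'X)) exprMn -rmorphXn coefCM.
by rewrite bellBE sign_fact_term.
Qed.

Theorem mainTheorem4 (n : nat) : (1 <= n)%N ->
  Rpoly n.+1 =
  \sum_(1 <= k < n.+1)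
     ((-1) ^+ (n - k) * (k`!)%:R) *: ((1 + 'X) ^+ k.+1 * bellB n k xsR).
Proof.
move=> n_gt0; rewrite -quot_coef_bell //.
apply: (@binconv_inj _ (fun i => (-1) ^+ i * denom_coef i) (fun j => Rpoly j.+1)
          (fun j => (-1) ^+ j * quot_coef n j) n _ _ n (leqnn n)) => [|m le_mn].
  by rewrite mulr1.
rewrite Rpoly_binconv binconv_sign binconv_quot_coef //.
by case: m {le_mn} => [|m]; rewrite ?expr0 ?mul1r // mul0r mulr0.
Qed.
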